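(* In the setting below, let $I\subseteq\{0,\dots,n\}$ and $J\subseteq\{0,\dots,m\}$ be intervals of equal length such that every point of $I\times J$ is $2\Delta$-relevant, where $\Delta\ge1$. Then the sumset $\{(i,f(i)) : i\in I\}+\{(j,g(j)) : j\in J\}\subseteq\mathbb{Z}^2$ has size $O(\Delta\cdot(|I|+|J|))$.
   Context: Setting: $f\colon\{0,\dots,n\}\to\mathbb{Z}$, $g\colon\{0,\dots,m\}\to\mathbb{Z}$, and convex functions $\breve f\colon\{0,\dots,n\}\to\mathbb{Q}$, $\breve g\colon\{0,\dots,m\}\to\mathbb{Q}$ (convex: $F(i)-F(i-1)\le F(i+1)-F(i)$ for interior $i$) with $\breve f\le f\le\breve f+\Delta$ and $\breve g\le g\le\breve g+\Delta$ pointwise. Let $\breve h(k)=\min_{i+j=k}\breve f(i)+\breve g(j)$. A point $(i,j)$ is $\delta$-relevant if $\breve f(i)+\breve g(j)\le\breve h(i+j)+\delta$. The sumset of $A,B\subseteq\mathbb{Z}^2$ is $A+B=\{a+b : a\in A,b\in B\}$ with componentwise addition. *)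

From HB Require Import structures.
From mathcomp Require Import all_boot all_order all_algebra.
Set Implicit Arguments. Unset Strict Implicit. Unset Printing Implicit Defensive.
Import Order.TTheory GRing.Theory Num.Theory.
Local Open Scope ring_scope.

(* A function F : {0,...,n} -> rat is represented by F : nat -> rat, only its
   values on 0..n matter. Convexity: F(i)-F(i-1) <= F(i+1)-F(i) for 0<i<n. *)
Definition convex_on (n : nat) (F : nat -> rat) : Prop :=
  forall i : nat, (0 < i)%N -> (i < n)%N ->
    F i - F i.-1 <= F i.+1 - F i.

(* The default of the big min is the candidate i = minn k n, which is a valid
   candidate whenever k <= n+m (the only case in which hbreve is used). *)
Definition hbreve (n m : nat) (bf bg : nat -> rat) (k : nat) : rat :=
  \big[Order.min/(bf (minn k n) + bg (k - minn k n)%N)]_(i < n.+1 |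
      (i <= k)%N && (k - i <= m)%N) (bf i + bg (k - i)%N).

Definition relevant (n m : nat) (bf bg : nat -> rat) (delta : rat) (i j : nat) : Prop :=
  bf i + bg j <= hbreve n m bf bg (i + j) + delta.

Definition sumset (A B : seq (int * int)) : seq (int * int) :=
  undup [seq (a.1 + b.1, a.2 + b.2) | a <- A, b <- B].

Definition graph_on (f : nat -> int) (a len : nat) : seq (int * int) :=
  [seq ((i%:Z), f i) | i <- iota a len].

From HB Require Import structures.
From mathcomp Require Import all_boot all_order all_algebra.
From mathcomp Require Import lra zify.
Set Implicit Arguments. Unset Strict Implicit.
Import Order.TTheory GRing.Theory Num.Theory.
Local Open Scope ring_scope.

(* Write h for the lower envelope hbreve of bf and bg.  For
   (i, j) in I x J the value f(i) + g(j) lies between bf(i) + bg(j) and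
   bf(i) + bg(j) + 2 Delta, while h(i+j) <= bf(i) + bg(j) <= h(i+j) + 2 Delta
   by definition of h and by 2Delta-relevance; hence
       h(i+j) <= f(i) + g(j) <= h(i+j) + 4 Delta.
   So every point (k, z) of the sumset lies in the "band" of integer points
   above the curve h: its abscissa k ranges over the 2|I| values of I + J, and
   its ordinate z over the fewer than 4 Delta + 2 integers of the window
   [h(k), h(k) + 4 Delta].  The band has at most 2|I| (4 Delta + 2) points,
   which is at most 6 Delta (|I| + |J|) since Delta >= 1.
   The file proves: the envelope bound, the window estimate, the integer
   rounding of the window, the counting of band points, and then the theorem. *)

Lemma hbreve_le n m (bf bg : nat -> rat) i j : (i <= n)%N -> (j <= m)%N ->
  hbreve n m bf bg (i + j) <= bf i + bg j.
Proof.
move=> le_in le_jm; have lt_in : (i < n.+1)%N by [].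
have := @bigmin_le_cond _ _ 'I_n.+1
  (bf (minn (i + j) n) + bg (i + j - minn (i + j) n)%N) (Ordinal lt_in)
  (fun k : 'I_n.+1 => (k <= i + j)%N && (i + j - k <= m)%N)
  (fun k : 'I_n.+1 => bf k + bg (i + j - k)%N).
by rewrite /= addKn leq_addr le_jm => /(_ isT).
Qed.

Lemma sum_near_envelope n m (f g : nat -> int) (bf bg : nat -> rat) D i j :
  (i <= n)%N -> (j <= m)%N ->
  bf i <= (f i)%:~R <= bf i + D -> bg j <= (g j)%:~R <= bg j + D ->
  relevant n m bf bg (2 * D) i j ->
  hbreve n m bf bg (i + j) <= (f i + g j)%:~R
    <= hbreve n m bf bg (i + j) + 4 * D.
Proof.
move=> le_in le_jm /andP[fi_lo fi_hi] /andP[gj_lo gj_hi].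
rewrite /relevant intrD => rel.
have env := hbreve_le bf bg le_in le_jm.
by apply/andP; split; lra.
Qed.

Lemma int_in_floor_window (x c : rat) (z : int) : x <= z%:~R <= x + c ->
  Num.floor x <= z < Num.floor x + (Num.floor c + 2).
Proof.
move=> /andP[z_lo z_hi].
have fx_lo := floor_le x; have fx_hi := floorD1_gt x.
have fc_hi := floorD1_gt c.
rewrite intrD in fx_hi fc_hi.
apply/andP; split; [rewrite -(ler_int rat) | rewrite -(ltr_int rat) !intrD]; lra.
Qed.

Definition band (h : nat -> rat) (lo w N : nat) : seq (int * int) :=
  [seq (k%:Z, Num.floor (h k) + t%:Z) | k <- iota lo w, t <- iota 0 N].

Lemma size_band (h : nat -> rat) lo w N : size (band h lo w N) = (w * N)%N.
Proof. by rewrite size_allpairs !size_iota. Qed.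

Lemma mem_band (h : nat -> rat) lo w N (k : nat) (z : int) :
  (lo <= k < lo + w)%N -> Num.floor (h k) <= z < Num.floor (h k) + N%:Z ->
  (k%:Z, z) \in band h lo w N.
Proof.
move=> k_in /andP[z_lo z_hi]; apply/allpairsP.
exists (k, `|z - Num.floor (h k)|%N); split => /=.
- by rewrite mem_iota.
- by rewrite mem_iota; lia.
- by congr (_, _); rewrite gez0_abs ?subr_ge0 // subrKC.
Qed.

Lemma band_height_le (D : rat) : 1 <= D ->
  (absz (Num.floor (4 * D) + 2))%:R <= 6 * D.
Proof.
move=> D_ge1; have fl := floor_le (4 * D).
have fl_ge0 : 0 <= Num.floor (4 * D) by rewrite floor_ge0; lra.
rewrite -[_%:R]/((Posz _)%:~R) gez0_abs ?addr_ge0 // intrD; lra.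
Qed.

Theorem mainTheorem15 :
  exists C : rat, 0 < C /\
  forall (n m : nat) (f g : nat -> int) (bf bg : nat -> rat) (Delta : rat)
         (a b len : nat),
    convex_on n bf -> convex_on m bg ->
    (forall i : nat, (i <= n)%N -> bf i <= (f i)%:~R <= bf i + Delta) ->
    (forall j : nat, (j <= m)%N -> bg j <= (g j)%:~R <= bg j + Delta) ->
    1 <= Delta ->
    (a + len <= n.+1)%N -> (b + len <= m.+1)%N ->
    (forall i j : nat, (a <= i < a + len)%N -> (b <= j < b + len)%N ->
       relevant n m bf bg (2 * Delta) i j) ->
    (size (sumset (graph_on f a len) (graph_on g b len)))%:R
      <= C * Delta * (len + len)%:R.
Proof.
exists 6; split => // n m f g bf bg D a b len _ _ f_approx g_approx D_ge1
  I_in J_in rel.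
set h := hbreve n m bf bg; set N := absz (Num.floor (4 * D) + 2).
have N_ge0 : 0 <= Num.floor (4 * D) + 2 by rewrite addr_ge0 // floor_ge0; lra.
have sumset_in_band :
    {subset sumset (graph_on f a len) (graph_on g b len)
       <= band h (a + b) (len + len) N}.
  move=> _ /[!mem_undup] /allpairsP[[_ _] [/= /mapP[i i_in ->] /mapP[j j_in ->] ->]].
  move: i_in j_in; rewrite !mem_iota => i_in j_in /=.
  have le_in : (i <= n)%N by lia.
  have le_jm : (j <= m)%N by lia.
  have window := sum_near_envelope le_in le_jm
    (f_approx _ le_in) (g_approx _ le_jm) (rel _ _ i_in j_in).
  rewrite -PoszD; apply: mem_band; first lia.
  by rewrite /N gez0_abs //; exact: int_in_floor_window window.
have := uniq_leq_size (undup_uniq _) sumset_in_band.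
rewrite size_band -(ler_nat rat) natrM => /le_trans; apply.
by rewrite mulrC ler_wpM2r // band_height_le.
Qed.
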